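(* Let $I,J$ be finite sets and $E\subseteq I\times J$, with $J_i=\{j:(i,j)\in E\}$ and $I_j=\{i:(i,j)\in E\}$, and let $\lambda_i>0$ for $i\in I$. Let $p(\rho)=\min\{2\rho,1\}$. Suppose that nonnegative numbers $(x_{ij})_{(i,j)\in E}$, $(y_{ij})_{(i,j)\in E}$ and $(\Delta_j)_{j\in J}$ satisfy the following conditions: (i) $x_i:=\sum_{j\in J_i}x_{ij}\le\lambda_i$ for every $i$; (ii) $\sum_{j\in J_i}y_{ij}=\lambda_i\,p(x_i/\lambda_i)$ for every $i$; (iii) $\lambda_i p(x_i/\lambda_i)-\lambda_i p\big((x_i-x_{ij})/\lambda_i\big)\le y_{ij}\le\min\{2x_{ij},\lambda_i\}$ for every $(i,j)\in E$; (iv) $\Delta_j\le 1-\ln 2$ for every $j$. Let $y_j=\sum_{i\in I_j}y_{ij}$ and $\Delta_{ij}=(2x_{ij}-\lambda_i)^+$; no relation between $\Delta_j$ and $\sum_i\Delta_{ij}$ is assumed. Then \[ \sum_{j\in J}(2-\Delta_j)\sum_{i\in I_j}\Big(\lambda_i p\Big(\tfrac{x_i}{\lambda_i}\Big)-\lambda_i p\Big(\tfrac{x_i-x_{ij}}{\lambda_i}\Big)-\Delta_{ij}\Big)+\sum_{j\in J}y_j(\Delta_j-1+\ln 2)\ \le\ (2+2\ln 2)\sum_{(i,j)\in E}(y_{ij}-x_{ij}). \]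
   Context: $z^+=\max\{z,0\}$. *)

From HB Require Import structures.
From mathcomp Require Import all_boot all_order all_algebra.
From mathcomp Require Import reals exp.
Set Implicit Arguments. Unset Strict Implicit. Unset Printing Implicit Defensive.
Import Order.TTheory GRing.Theory Num.Theory.
Local Open Scope ring_scope.

Definition pfun (R : realType) (rho : R) : R := Num.min (2 * rho) 1.

Definition posp (R : realType) (z : R) : R := Num.max z 0.

Definition rowsum (R : realType) (I J : finType) (E : {set I * J})
  (x : I -> J -> R) (i : I) : R := \sum_(j : J | (i, j) \in E) x i j.

Definition colsum (R : realType) (I J : finType) (E : {set I * J})
  (y : I -> J -> R) (j : J) : R := \sum_(i : I | (i, j) \in E) y i j.

From HB Require Import structures.
From mathcomp Require Import all_boot all_order all_algebra.
From mathcomp Require Import reals exp ring lra.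
Set Implicit Arguments. Unset Strict Implicit. Unset Printing Implicit Defensive.
Import Order.TTheory GRing.Theory Num.Theory.
Local Open Scope ring_scope.

(* Write a_ij for the bracket on the left.  Since 2 - D_j = (1 + ln 2) + (1 - ln 2 - D_j),
   a_ij <= y_ij and D_j <= 1 - ln 2, trading the second part of the weight for y_ij bounds
   the left side by (1 + ln 2) sum a_ij.  By (ii), it then suffices to bound each row sum
   sum_j a_ij by 2 (min(2 x_i, lam_i) - x_i).  With X = x_i and t_j = x_ij,
   a_ij = min(2X, lam) - min(2(X - t_j), lam) - (2 t_j - lam)^+.  If 2X <= lam this is at
   most 2 t_j.  Otherwise, with c = 2X - lam, it is at most min((2 t_j - c)^+, lam - c),
   and such clipped excesses of a family summing to 2X add up to at most 2X - 2c: one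
   term is at most 2 t_k - c and, by superadditivity of (. - c)^+, the others together at
   most (2X - 2 t_k - c)^+. *)

Section RowBound.
Variable R : realType.

Lemma mul_pfun_div (lam t : R) : 0 < lam -> lam * pfun (t / lam) = Num.min (2 * t) lam.
Proof.
move=> lam_gt0; rewrite /pfun minr_pMr ?ltW // mulr1.
by congr Num.min; field; rewrite gt_eqF.
Qed.

Lemma posp_ge0 (z : R) : 0 <= posp z.
Proof. by rewrite /posp le_max lexx orbT. Qed.

Lemma posp_eq0 (z : R) : z <= 0 -> posp z = 0.
Proof. exact: max_r. Qed.

Lemma posp_subD_le (c a b : R) : 0 <= c -> 0 <= a -> 0 <= b ->
  posp (a - c) + posp (b - c) <= posp (a + b - c).
Proof.
move=> c_ge0 a_ge0 b_ge0; rewrite /posp.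
case: (lerP (a - c) 0); case: (lerP (b - c) 0); case: (lerP (a + b - c) 0); lra.
Qed.

Lemma sum_posp_sub_le (J : finType) (P : pred J) (u : J -> R) (c : R) :
  0 <= c -> (forall j, P j -> 0 <= u j) ->
  \sum_(j | P j) posp (u j - c) <= posp (\sum_(j | P j) u j - c).
Proof.
move=> c_ge0 u_ge0.
suff [] : \sum_(j | P j) posp (u j - c) <= posp (\sum_(j | P j) u j - c)
          /\ 0 <= \sum_(j | P j) u j by [].
apply: (big_ind2 (fun s t => s <= posp (t - c) /\ 0 <= t)).
- by rewrite posp_eq0 ?sub0r ?oppr_le0.
- move=> s1 t1 s2 t2 [le1 t1_ge0] [le2 t2_ge0] /=; split; last exact: addr_ge0.
  exact: le_trans (lerD le1 le2) (posp_subD_le c_ge0 t1_ge0 t2_ge0).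
- by move=> j Pj; split; [exact: lexx | exact: u_ge0].
Qed.

Lemma sum_clipped_excess_le (J : finType) (P : pred J) (u : J -> R) (c : R) :
  0 <= c -> (forall j, P j -> 0 <= u j) ->
  let L := \sum_(j | P j) u j - 2 * c in
  0 <= L -> \sum_(j | P j) Num.min (posp (u j - c)) L <= L.
Proof.
move=> c_ge0 u_ge0 L L_ge0.
case: (pickP (fun j => P j && (c < u j))) => [k /andP[Pk ck] | none_gt].
  rewrite (bigD1 k) //=.
  have rest_le : \sum_(j | P j && (j != k)) Num.min (posp (u j - c)) L
                 <= posp (\sum_(j | P j) u j - u k - c).
    apply: le_trans (_ : \sum_(j | P j && (j != k)) posp (u j - c) <= _).
      by apply: ler_sum => j _; rewrite ge_min lexx.
    rewrite [\sum_(j | P j) u j](bigD1 k) //= [u k + _]addrC addrK.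
    by apply: sum_posp_sub_le => // j /andP[Pj _]; exact: u_ge0.
  apply: le_trans (lerD (lexx _) rest_le) _.
  have min_le : Num.min (posp (u k - c)) L <= u k - c /\ Num.min (posp (u k - c)) L <= L.
    have -> : posp (u k - c) = u k - c by rewrite /posp max_l // subr_ge0 ltW.
    by rewrite !ge_min !lexx orbT.
  rewrite /L /posp in min_le *.
  case: (lerP (\sum_(j | P j) u j - u k - c) 0) => _; lra.
rewrite big1 // => j Pj.
have := none_gt j; rewrite Pj /= => /negbT; rewrite -leNgt => ucj.
by rewrite posp_eq0 ?subr_le0 //; apply: min_l.
Qed.

Definition gain (lam X t : R) : R :=
  Num.min (2 * X) lam - Num.min (2 * (X - t)) lam - posp (2 * t - lam).

Lemma gain_le_unsaturated (lam X t : R) : 0 <= t -> 2 * X <= lam -> gain lam X t <= 2 * t.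
Proof.
move=> t_ge0 X_le; have := posp_ge0 (2 * t - lam); rewrite /gain.
case: (lerP (2 * X) lam); case: (lerP (2 * (X - t)) lam); lra.
Qed.

Lemma gain_le_saturated (lam X t : R) : lam < 2 * X -> X <= lam ->
  gain lam X t <= Num.min (posp (2 * t - (2 * X - lam))) (2 * X - 2 * (2 * X - lam)).
Proof.
move=> lt_X X_le; rewrite le_min /gain (min_r (ltW lt_X)) /posp.
case: (lerP (2 * (X - t)) lam); case: (lerP (2 * t - lam) 0);
  case: (lerP (2 * t - (2 * X - lam)) 0); lra.
Qed.

Lemma sum_gain_le (J : finType) (P : pred J) (t : J -> R) (lam : R) :
  0 < lam -> (forall j, P j -> 0 <= t j) ->
  let X := \sum_(j | P j) t j in
  X <= lam -> \sum_(j | P j) gain lam X (t j) <= 2 * Num.min (2 * X) lam - 2 * X.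
Proof.
move=> lam_gt0 t_ge0 X X_le.
have sum2t : \sum_(j | P j) 2 * t j = 2 * X by rewrite -mulr_sumr.
case: (lerP (2 * X) lam) => [unsat | sat].
  apply: le_trans (_ : \sum_(j | P j) 2 * t j <= _).
    by apply: ler_sum => j Pj; apply: gain_le_unsaturated => //; exact: t_ge0.
  by rewrite sum2t; lra.
have c_ge0 : 0 <= 2 * X - lam by lra.
have u_ge0 j : P j -> 0 <= 2 * t j by move=> Pj; rewrite pmulr_rge0 ?t_ge0.
have L_ge0 : 0 <= 2 * X - 2 * (2 * X - lam) by lra.
have /= := sum_clipped_excess_le c_ge0 u_ge0; rewrite sum2t => /(_ L_ge0) clipped_le.
apply: le_trans (le_trans _ clipped_le) _; last lra.
by apply: ler_sum => j _; exact: gain_le_saturated.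
Qed.

Lemma trade_excess_le (a y d l : R) : a <= y -> d <= 1 - l ->
  (2 - d) * a + y * (d - 1 + l) <= (1 + l) * a.
Proof.
move=> le_ay le_d.
have : 0 <= (1 - l - d) * (y - a) by apply: mulr_ge0; lra.
nra.
Qed.

End RowBound.

Theorem mainTheorem5 (R : realType) (I J : finType) (E : {set I * J})
  (lam : I -> R) (x y : I -> J -> R) (D : J -> R) :
  (forall i, 0 < lam i) ->
  (forall i j, (i, j) \in E -> 0 <= x i j) ->
  (forall i j, (i, j) \in E -> 0 <= y i j) ->
  (forall j, 0 <= D j) ->
  (* (i) *)
  (forall i, rowsum E x i <= lam i) ->
  (* (ii) *)
  (forall i, \sum_(j : J | (i, j) \in E) y i j
             = lam i * pfun (rowsum E x i / lam i)) ->
  (* (iii) *)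
  (forall i j, (i, j) \in E ->
     lam i * pfun (rowsum E x i / lam i)
       - lam i * pfun ((rowsum E x i - x i j) / lam i) <= y i j /\
     y i j <= Num.min (2 * x i j) (lam i)) ->
  (* (iv) *)
  (forall j, D j <= 1 - ln 2) ->
  \sum_(j : J) (2 - D j) *
      \sum_(i : I | (i, j) \in E)
        (lam i * pfun (rowsum E x i / lam i)
         - lam i * pfun ((rowsum E x i - x i j) / lam i)
         - posp (2 * x i j - lam i))
    + \sum_(j : J) colsum E y j * (D j - 1 + ln 2)
  <= (2 + 2 * ln 2) * \sum_(e in E) (y e.1 e.2 - x e.1 e.2).
Proof.
move=> lam_gt0 x_ge0 _ _ row_le y_row_sum y_bounds D_le.
set a := fun i j => gain (lam i) (rowsum E x i) (x i j).
have aE i j : lam i * pfun (rowsum E x i / lam i)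
    - lam i * pfun ((rowsum E x i - x i j) / lam i) - posp (2 * x i j - lam i) = a i j.
  by rewrite /a /gain !mul_pfun_div.
have ln2_ge0 : 0 <= ln (2 : R) by rewrite ln_ge0 // ler1n.
apply: le_trans (_ : \sum_j \sum_(i | (i, j) \in E) (1 + ln 2) * a i j <= _).
  rewrite -big_split /=; apply: ler_sum => j _.
  rewrite /colsum mulr_sumr mulr_suml -big_split /=; apply: ler_sum => i Eij.
  rewrite aE; apply: trade_excess_le (D_le j).
  have [y_ge _] := y_bounds i j Eij; have := posp_ge0 (2 * x i j - lam i).
  by rewrite -aE; lra.
have sum_over_E (F : I -> J -> R) :
    \sum_(e in E) F e.1 e.2 = \sum_i \sum_(j | (i, j) \in E) F i j.
  by rewrite pair_big_dep; apply: eq_bigl => -[].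
rewrite (exchange_big_dep xpredT) //= (sum_over_E (fun i j => y i j - x i j)).
rewrite (_ : 2 + 2 * ln 2 = (1 + ln 2) * 2); last by ring.
rewrite -mulrA mulr_sumr mulr_sumr; apply: ler_sum => i _.
rewrite -mulr_sumr; apply: ler_wpM2l; first lra.
rewrite [X in _ <= 2 * X]sumrB y_row_sum mul_pfun_div // mulrBr.
by rewrite /a /rowsum; apply: (sum_gain_le (lam_gt0 i) (x_ge0 i) (row_le i)).
Qed.
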